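(* For every integer $r\ge2$, $$\int_0^{\frac\pi2} \theta^{r-2}\log\left(\cos\frac\theta2\right)d\theta=-\frac{\pi^{r-1}}{r-1}\left(\frac1{2^r}\log2+2^{r-1}\log\mathcal C_r\left(\frac14\right)\right).$$
   Context: For an integer $r\ge2$ let $P_r(y)=(1-y)\exp\left(y+\frac{y^2}{2}+\cdots+\frac{y^r}{r}\right)$. The multiple cosine function of Kurokawa–Koyama of order $r\ge2$ is $\mathcal C_r(x)=\prod_{n\ge1,\ n\text{ odd}}\left\{P_r\left(\frac{x}{n/2}\right)P_r\left(-\frac{x}{n/2}\right)^{(-1)^{r-1}}\right\}^{(n/2)^{r-1}}$, interpreted as $\mathcal C_r(x)=\exp\Big(\sum_{n\ge1,\,n\text{ odd}}(n/2)^{r-1}\big[\operatorname{Log}P_r(2x/n)+(-1)^{r-1}\operatorname{Log}P_r(-2x/n)\big]\Big)$, where $\operatorname{Log}P_r(y):=\operatorname{Log}(1-y)+y+\frac{y^2}{2}+\cdots+\frac{y^r}{r}$ with $\operatorname{Log}$ the principal branch. The series converges and defines a holomorphic function on $D=\mathbb C\setminus\big((-\infty,-\tfrac12]\cup[\tfrac12,\infty)\big)$, positive on $(-\tfrac12,\tfrac12)$; $\log\mathcal C_r(x)$ denotes the exponent above (the real logarithm for real $|x|<\tfrac12$). *)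

From Stdlib Require Import Reals.
From Coquelicot Require Import Coquelicot.
Open Scope R_scope.

(* Log P_r(y) := Log(1-y) + y + y^2/2 + ... + y^r/r, for real y < 1
   (where the principal Log agrees with the real ln). *)
Definition LogP (r : nat) (y : R) : R :=
  ln (1 - y) + sum_f_R0 (fun k => y ^ (S k) / INR (S k)) (pred r).

Definition logC_term (r : nat) (x : R) (m : nat) : R :=
  let n := INR (2 * m + 1) in
  (n / 2) ^ (r - 1) * (LogP r (2 * x / n) + (-1) ^ (r - 1) * LogP r (- (2 * x / n))).

(* log C_r(x) for real |x| < 1/2: the (convergent) series over odd n >= 1. *)
Definition logC (r : nat) (x : R) : R := Series (logC_term r x).

From Stdlib Require Import Reals Lra Lia.
From Coquelicot Require Import Coquelicot.
From Stdlib Require Import ssreflect.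
Open Scope R_scope.

(* The Wallis-type integrals I_n(x) = int_0^(pi/2) cos(2xt) cos^n t dt satisfy
   ((n+2)^2 - 4x^2) I_(n+2)(x) = (n+2)(n+1) I_n(x) and (1 - 4x^2) I_1(x) = cos(pi x), so
   with rho_N(x) = I_(2N+1)(x) / I_(2N+1)(0) we get the finite Euler product
   cos(pi x) = rho_N(x) prod_(m <= N) (1 - 4x^2/(2m+1)^2), where 1 - 2/(2N+3) <= rho_N <= 1.
   The x-derivative of the m-th term of log C_r(x) is x^(r-1) times the derivative of
   ln(1 - 4x^2/(2m+1)^2); integrating by parts and summing, the N-th partial sum of
   log C_r(x) is x^(r-1) ln cos(pi x) - (r-1) int_0^x t^(r-2) ln cos(pi t) dt up to an
   error O(1/N) coming from ln rho_N.  At x = 1/4, cos(pi/4) = 1/sqrt 2 and the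
   substitution theta = 2 pi t give the formula. *)


Lemma RInt_lincomb (f g : R -> R) a b c d : ex_RInt f a b -> ex_RInt g a b ->
  RInt (fun t => c * f t + d * g t) a b = c * RInt f a b + d * RInt g a b.
Proof.
  move=> Hf Hg. rewrite RInt_plus; try by apply: ex_RInt_scal.
  by rewrite !RInt_scal.
Qed.

Lemma ex_RInt_lincomb (f g : R -> R) a b c d : ex_RInt f a b -> ex_RInt g a b ->
  ex_RInt (fun t => c * f t + d * g t) a b.
Proof. by move=> Hf Hg; apply: ex_RInt_plus; apply: ex_RInt_scal. Qed.

Lemma Rmin_Rmax_0_le a t : 0 <= a -> Rmin 0 a <= t <= Rmax 0 a -> 0 <= t <= a.
Proof. by move=> Ha; rewrite Rmin_left // Rmax_right. Qed.

Definition wallis (n : nat) (x : R) : R :=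
  RInt (fun t => cos (2 * x * t) * cos t ^ n) 0 (PI / 2).

Lemma ex_RInt_wallis n x : ex_RInt (fun t => cos (2 * x * t) * cos t ^ n) 0 (PI / 2).
Proof. apply: ex_RInt_continuous => t _; apply: ex_derive_continuous; auto_derive; auto. Qed.

Lemma wallis_rec n x :
  ((INR n + 2) ^ 2 - 4 * x ^ 2) * wallis (n + 2) x = (INR n + 2) * (INR n + 1) * wallis n x.
Proof.
  set F := fun t => (INR n + 2) * cos (2 * x * t) * cos t ^ (n + 1) * sin t
                    - 2 * x * sin (2 * x * t) * cos t ^ (n + 2).
  have HF : is_RInt (fun t => ((INR n + 2) ^ 2 - 4 * x ^ 2) * (cos (2 * x * t) * cos t ^ (n + 2))
                      + (- ((INR n + 2) * (INR n + 1))) * (cos (2 * x * t) * cos t ^ n))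
              0 (PI / 2) (F (PI / 2) - F 0).
  { apply: is_RInt_derive => t _.
    - rewrite /F; auto_derive; first by auto.
      have Hs := sin2_cos2 t; rewrite /Rsqr in Hs.
      rewrite (_ : Init.Nat.pred (n + 1) = n); last lia.
      rewrite (_ : Init.Nat.pred (n + 2) = (n + 1)%nat); last lia.
      rewrite !pow_add !plus_INR /=.
      apply: Rminus_diag_uniq.
      transitivity (- ((INR n + 2) * (INR n + 1)) * cos (2 * x * t) * cos t ^ n
                    * (sin t * sin t + cos t * cos t - 1)); first ring.
      rewrite Hs; ring.
    - apply: ex_derive_continuous; auto_derive; auto. }
  have HF0 : F (PI / 2) - F 0 = 0.
  { rewrite /F cos_PI2 Rmult_0_r sin_0 !pow_add /=; ring. }
  rewrite HF0 in HF; move/is_RInt_unique: HF.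
  rewrite RInt_lincomb; try exact: ex_RInt_wallis.
  rewrite /wallis; lra.
Qed.

Lemma wallis_1 x : (1 - 4 * x ^ 2) * wallis 1 x = cos (PI * x).
Proof.
  set F := fun t => cos (2 * x * t) * sin t - 2 * x * sin (2 * x * t) * cos t.
  have HF : is_RInt (fun t => (1 - 4 * x ^ 2) * (cos (2 * x * t) * cos t ^ 1))
              0 (PI / 2) (F (PI / 2) - F 0).
  { apply: is_RInt_derive => t _.
    - rewrite /F; auto_derive; first by auto. ring.
    - apply: ex_derive_continuous; auto_derive; auto. }
  have HF0 : F (PI / 2) - F 0 = cos (PI * x).
  { rewrite /F cos_PI2 sin_PI2 !Rmult_0_r sin_0 (_ : 2 * x * (PI / 2) = PI * x); last field.
    ring. }
  rewrite -HF0 -(is_RInt_unique _ _ _ _ HF) RInt_scal //; exact: ex_RInt_wallis.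
Qed.

Lemma wallis_1_0 : wallis 1 0 = 1.
Proof. have := wallis_1 0; rewrite Rmult_0_r cos_0; lra. Qed.

Lemma wallis_odd_succ_0 N :
  wallis (2 * S N + 1) 0 = (2 * INR N + 2) / (2 * INR N + 3) * wallis (2 * N + 1) 0.
Proof.
  have := wallis_rec (2 * N + 1) 0.
  rewrite (_ : (2 * N + 1 + 2 = 2 * S N + 1)%nat); last lia.
  rewrite (_ : INR (2 * N + 1) = 2 * INR N + 1); last by rewrite plus_INR mult_INR /=; ring.
  have HN := pos_INR N.
  set W := wallis (2 * S N + 1) 0 => H.
  rewrite (_ : W = ((2 * INR N + 1 + 2) ^ 2 - 4 * 0 ^ 2) * W / (2 * INR N + 3) ^ 2);
    last by field; lra.
  rewrite H; field; lra.
Qed.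

Lemma wallis_odd_0_pos N : 0 < wallis (2 * N + 1) 0.
Proof.
  elim: N => [|N IH]; first by rewrite /= wallis_1_0; lra.
  rewrite wallis_odd_succ_0; have HN := pos_INR N.
  apply: Rmult_lt_0_compat => //; apply: Rdiv_lt_0_compat; lra.
Qed.

Lemma cos_pow_ge0 n t : 0 <= t <= PI / 2 -> 0 <= cos t ^ n.
Proof. by move=> Ht; apply: pow_le; apply: cos_ge_0; lra. Qed.

Lemma wallis_le_wallis_0 n x : wallis n x <= wallis n 0.
Proof.
  apply: RInt_le; try exact: ex_RInt_wallis; first by have := PI_RGT_0; lra.
  move=> t Ht; rewrite Rmult_0_r Rmult_0_l cos_0.
  have := cos_pow_ge0 n t ltac:(lra); have := COS_bound (2 * x * t); nra.
Qed.

(* For [0 <= x <= 1]: [1 - cos (2 x t) <= 1 - cos (2 t) = 2 sin^2 t = 2 (1 - cos^2 t)]. *)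
Lemma wallis_0_sub_le n x : 0 <= x <= 1 ->
  wallis n 0 - wallis n x <= 2 * (wallis n 0 - wallis (n + 2) 0).
Proof.
  move=> Hx.
  have -> : wallis n 0 - wallis n x = RInt (fun t => 1 * (cos (2 * 0 * t) * cos t ^ n)
                + (-1) * (cos (2 * x * t) * cos t ^ n)) 0 (PI / 2).
  { rewrite RInt_lincomb; try exact: ex_RInt_wallis. rewrite /wallis; ring. }
  have -> : 2 * (wallis n 0 - wallis (n + 2) 0) = RInt (fun t => 2 * (cos (2 * 0 * t) * cos t ^ n)
                + (-2) * (cos (2 * 0 * t) * cos t ^ (n + 2))) 0 (PI / 2).
  { rewrite RInt_lincomb; try exact: ex_RInt_wallis. rewrite /wallis; ring. }
  apply: RInt_le; try by apply: ex_RInt_lincomb; apply: ex_RInt_wallis.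
  - by have := PI_RGT_0; lra.
  - move=> t Ht; rewrite Rmult_0_r Rmult_0_l cos_0 pow_add.
    have Hc := cos_pow_ge0 n t ltac:(lra).
    have Hd : cos (2 * t) <= cos (2 * x * t) by apply: cos_decr_1; nra.
    rewrite cos_2a_sin in Hd.
    have Hs := sin2_cos2 t; rewrite /Rsqr in Hs; simpl; nra.
Qed.

Lemma INR_odd m : INR (2 * m + 1) = 2 * INR m + 1.
Proof. by rewrite plus_INR mult_INR /=; ring. Qed.

Definition wallis_ratio N x := wallis (2 * N + 1) x / wallis (2 * N + 1) 0.

Lemma wallis_ratio_bounds N x : 0 <= x <= 1 ->
  1 - 2 / (2 * INR N + 3) <= wallis_ratio N x <= 1.
Proof.
  move=> Hx; have Hc := wallis_odd_0_pos N; have HN := pos_INR N.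
  have Hle := wallis_le_wallis_0 (2 * N + 1) x.
  have Hge := wallis_0_sub_le (2 * N + 1) x Hx.
  rewrite (_ : (2 * N + 1 + 2 = 2 * S N + 1)%nat) in Hge; last lia.
  rewrite wallis_odd_succ_0 in Hge.
  rewrite /wallis_ratio; set c := wallis (2 * N + 1) 0 in Hc Hle Hge *.
  rewrite (_ : 2 * (c - (2 * INR N + 2) / (2 * INR N + 3) * c) = 2 / (2 * INR N + 3) * c)
    in Hge; last by field; lra.
  split.
  - apply: (Rmult_le_reg_r c) => //; rewrite /Rdiv Rmult_assoc Rinv_l; lra.
  - apply: (Rmult_le_reg_r c) => //; rewrite /Rdiv Rmult_assoc Rinv_l; lra.
Qed.

Lemma wallis_ratio_pos N x : 0 <= x <= 1 -> 0 < wallis_ratio N x.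
Proof.
  move=> Hx; have [Hl _] := wallis_ratio_bounds N x Hx; have HN := pos_INR N.
  suff : 2 / (2 * INR N + 3) <= 2 / 3 by lra.
  apply: Rmult_le_compat_l; first lra; apply: Rinv_le_contravar; lra.
Qed.

Lemma wallis_ratio_0 x : wallis_ratio 0 x * (1 - 4 * x ^ 2) = cos (PI * x).
Proof. by rewrite /wallis_ratio /= wallis_1_0 -wallis_1 /Rdiv Rinv_1; ring. Qed.

Lemma wallis_ratio_succ N x :
  wallis_ratio N x = wallis_ratio (S N) x * (1 - 4 * x ^ 2 / INR (2 * S N + 1) ^ 2).
Proof.
  have Hc := wallis_odd_0_pos N.
  have := wallis_rec (2 * N + 1) x.
  rewrite (_ : (2 * N + 1 + 2 = 2 * S N + 1)%nat); last lia.
  rewrite /wallis_ratio wallis_odd_succ_0.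
  rewrite !INR_odd S_INR; have HN := pos_INR N.
  move: Hc; set c := wallis (2 * N + 1) 0 => Hc.
  set K := 2 * INR N + 1 + 2; set b := wallis (2 * S N + 1) x => H.
  have -> : b / ((2 * INR N + 2) / (2 * INR N + 3) * c) * (1 - 4 * x ^ 2 / (2 * (INR N + 1) + 1) ^ 2)
            = (K ^ 2 - 4 * x ^ 2) * b / (K * (K - 1) * c) by rewrite /K; field; lra.
  rewrite H /K; field; lra.
Qed.

Definition ln_euler_factor (m : nat) (t : R) := ln (1 - 4 * t ^ 2 / INR (2 * m + 1) ^ 2).

Lemma euler_factor_pos m t : 0 <= t < 1 / 2 -> 0 < 1 - 4 * t ^ 2 / INR (2 * m + 1) ^ 2.
Proof.
  move=> Ht; rewrite INR_odd; have Hm := pos_INR m.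
  suff : 4 * t ^ 2 / (2 * INR m + 1) ^ 2 <= 4 * t ^ 2 by nra.
  rewrite -[X in _ <= X]Rdiv_1 /Rdiv; apply: Rmult_le_compat_l; first nra.
  rewrite -Rinv_1; apply: Rinv_le_contravar; nra.
Qed.

Lemma cos_PI_pos t : 0 <= t < 1 / 2 -> 0 < cos (PI * t).
Proof. by move=> Ht; have Hpi := PI_RGT_0; apply: cos_gt_0; nra. Qed.

Lemma ln_cos_partial_product N x : 0 <= x < 1 / 2 ->
  ln (cos (PI * x)) = sum_f_R0 (fun m => ln_euler_factor m x) N + ln (wallis_ratio N x).
Proof.
  move=> Hx; have Hr := wallis_ratio_pos _ x ltac:(lra).
  elim: N => [|N IH] /=.
  - have Hf : 4 * x ^ 2 / INR (2 * 0 + 1) ^ 2 = 4 * x ^ 2 by rewrite /=; field.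
    rewrite -wallis_ratio_0 ln_mult // /ln_euler_factor ?Hf; [ring | nra].
  - rewrite IH (wallis_ratio_succ N x) ln_mult //; last exact: euler_factor_pos.
    rewrite /ln_euler_factor; ring.
Qed.

Lemma ln_le_sub_1 y : 0 < y -> ln y <= y - 1.
Proof. by move=> Hy; rewrite -{2}(exp_ln y) //; have := exp_ineq1_le (ln y); lra. Qed.

Lemma ln_wallis_ratio_bound N x : 0 <= x <= 1 ->
  Rabs (ln (wallis_ratio N x)) <= 2 / (INR N + 1).
Proof.
  move=> Hx; have [Hl Hu] := wallis_ratio_bounds N x Hx.
  have Hp := wallis_ratio_pos N x Hx; have HN := pos_INR N.
  rewrite Rabs_left1; last by rewrite -ln_1; apply: ln_le.
  have Hinv : - ln (wallis_ratio N x) <= / wallis_ratio N x - 1.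
  { by rewrite -ln_Rinv //; apply: ln_le_sub_1; apply: Rinv_0_lt_compat. }
  suff : / wallis_ratio N x <= (2 * INR N + 3) / (2 * INR N + 1).
  { move=> H; apply: (Rle_trans _ _ _ Hinv).
    apply: (Rle_trans _ ((2 * INR N + 3) / (2 * INR N + 1) - 1)); first lra.
    rewrite (_ : (2 * INR N + 3) / (2 * INR N + 1) - 1 = 2 / (2 * INR N + 1)); last by field; lra.
    apply: Rmult_le_compat_l; first lra; apply: Rinv_le_contravar; lra. }
  rewrite -(Rinv_div (2 * INR N + 1)); apply: Rinv_le_contravar => //.
  - by apply: Rdiv_lt_0_compat; lra.
  - by rewrite (_ : (2 * INR N + 1) / (2 * INR N + 3) = 1 - 2 / (2 * INR N + 3)) //; field; lra.
Qed.

Lemma is_derive_sum_pow_div N y :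
  is_derive (fun y => sum_f_R0 (fun k => y ^ S k / INR (S k)) N) y (sum_f_R0 (fun k => y ^ k) N).
Proof.
  elim: N => [|N IH]; first by rewrite /=; auto_derive; [|field].
  apply: (is_derive_plus (fun y => sum_f_R0 (fun k => y ^ S k / INR (S k)) N)
            (fun y => y ^ S (S N) / INR (S (S N)))) => //.
  have HN : INR (S (S N)) <> 0 by apply: not_0_INR.
  by auto_derive; [|rewrite /=; field].
Qed.

Lemma is_derive_LogP p y : y < 1 -> is_derive (LogP (S p)) y (- y ^ S p / (1 - y)).
Proof.
  move=> Hy; rewrite /LogP /=.
  have -> : - y ^ S p / (1 - y) = plus (- 1 / (1 - y)) (sum_f_R0 (fun k => y ^ k) p).
  { by rewrite tech3; last lra; rewrite /plus /=; field; lra. }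
  apply: (is_derive_plus (fun y => ln (1 - y))); last exact: is_derive_sum_pow_div.
  by auto_derive; [lra | field; lra].
Qed.

Lemma INR_odd_ge1 m : 1 <= INR (2 * m + 1).
Proof. by rewrite INR_odd; have := pos_INR m; lra. Qed.

Definition d_ln_euler_factor (m : nat) (t : R) :=
  -8 * t / INR (2 * m + 1) ^ 2 / (1 - 4 * t ^ 2 / INR (2 * m + 1) ^ 2).

Lemma is_derive_ln_euler_factor m t : 0 <= t < 1 / 2 ->
  is_derive (ln_euler_factor m) t (d_ln_euler_factor m t).
Proof.
  move=> Ht; have Hpos := euler_factor_pos m t Ht; have Hn := INR_odd_ge1 m.
  rewrite /ln_euler_factor /d_ln_euler_factor; move: Hpos Hn; generalize (INR (2 * m + 1)) => n Hpos Hn.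
  auto_derive; first by rewrite /Rminus /Rdiv /= in Hpos.
  field; split; [lra | apply: Rgt_not_eq; nra].
Qed.

Lemma pow_neg1_sqr k : (-1) ^ k * (-1) ^ k = 1.
Proof. by rewrite -Rpow_mult_distr (_ : -1 * -1 = 1) ?pow1 //; ring. Qed.

(* With [y = 2 x / n] the two [LogP] terms have [y]-derivatives [-y^r/(1-y)] and
   [-y^r/(1+y)], whose sum [-2y^r/(1-y^2)] is [y^(r-1)] times the derivative of
   [ln (1 - y^2)]. *)
Lemma is_derive_logC_term k m x : 0 <= x < 1 / 2 ->
  is_derive (fun x => logC_term (S (S k)) x m) x (x ^ S k * d_ln_euler_factor m x).
Proof.
  move=> Hx; rewrite /logC_term /d_ln_euler_factor (_ : (S (S k) - 1 = S k)%nat); last lia.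
  have Hn := INR_odd_ge1 m; set n := INR (2 * m + 1) in Hn *.
  have Hy : 0 <= 2 * x / n < 1.
  { split; first by apply: Rdiv_le_0_compat; lra.
    apply: (Rmult_lt_reg_r n); first lra; field_simplify; lra. }
  have D1 : is_derive (fun x => LogP (S (S k)) (2 * x / n)) x
              (2 / n * (- (2 * x / n) ^ S (S k) / (1 - 2 * x / n))).
  { apply: (is_derive_comp (LogP (S (S k))) (fun x => 2 * x / n)).
    - by apply: is_derive_LogP; lra.
    - by auto_derive; [lra | field; lra]. }
  have D2 : is_derive (fun x => LogP (S (S k)) (- (2 * x / n))) x
              (- (2 / n) * (- (- (2 * x / n)) ^ S (S k) / (1 - - (2 * x / n)))).
  { apply: (is_derive_comp (LogP (S (S k))) (fun x => - (2 * x / n))).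
    - by apply: is_derive_LogP; lra.
    - by auto_derive; [lra | field; lra]. }
  have D := is_derive_scal _ _ ((n / 2) ^ S k) _
              (is_derive_plus _ _ _ _ _ D1 (is_derive_scal _ _ ((-1) ^ S k) _ D2)).
  rewrite /plus /scal /= /mult /= in D.
  set d := (X in is_derive _ _ X) in D.
  suff -> : x ^ S k * (-8 * x / n ^ 2 / (1 - 4 * x ^ 2 / n ^ 2)) = d by exact: D.
  rewrite /d {D D1 D2 d}; symmetry.
  have Hxk : (n / 2) ^ k * (2 * x / n) ^ k = x ^ k.
  { by rewrite -Rpow_mult_distr; f_equal; field; lra. }
  rewrite -tech_pow_Rmult -Hxk (_ : - (2 * x / n) = -1 * (2 * x / n)); last ring.
  rewrite Rpow_mult_distr; have Hsq := pow_neg1_sqr k.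
  move: Hsq; set p := (-1) ^ k; set a := (n / 2) ^ k; set b := (2 * x / n) ^ k => Hsq.
  apply: Rminus_diag_uniq.
  transitivity (- (n / 2) * a * (2 / n) * (2 * x / n) ^ 2 * b / (1 + 2 * x / n) * (p * p - 1)).
  - field; repeat split; try lra.
    rewrite (_ : n ^ 2 - 4 * x ^ 2 = (n - 2 * x) * (n + 2 * x)); last ring.
    apply: Rmult_integral_contrapositive; split; lra.
  - by rewrite Hsq; ring.
Qed.

Lemma continuous_d_ln_euler_factor m t : 0 <= t < 1 / 2 -> continuous (d_ln_euler_factor m) t.
Proof.
  move=> Ht; have Hpos := euler_factor_pos m t Ht.
  apply: ex_derive_continuous; rewrite /d_ln_euler_factor.
  move: Hpos; generalize (INR (2 * m + 1)) => n Hpos.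
  by auto_derive; rewrite /Rminus /Rdiv /= in Hpos; repeat split; lra.
Qed.

Lemma continuous_pow_mul k (f : R -> R) t : continuous f t -> continuous (fun t => t ^ k * f t) t.
Proof.
  move=> Hf; apply: (continuous_mult (fun t => t ^ k) f) => //.
  by apply: ex_derive_continuous; auto_derive.
Qed.

Lemma LogP_0 p : LogP p 0 = 0.
Proof.
  rewrite /LogP Rminus_0_r ln_1 Rplus_0_l; apply: sum_eq_R0 => j _.
  by rewrite pow_i; [rewrite /Rdiv; ring | lia].
Qed.

Lemma logC_term_0 r m : logC_term r 0 m = 0.
Proof. by rewrite /logC_term /Rdiv !Rmult_0_r Rmult_0_l Ropp_0 !LogP_0; ring. Qed.

Lemma continuous_ln_euler_factor m t : 0 <= t < 1 / 2 -> continuous (ln_euler_factor m) t.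
Proof. by move=> Ht; apply: ex_derive_continuous; eexists; apply: is_derive_ln_euler_factor. Qed.

Lemma ex_RInt_pow_mul_ln_euler_factor k m x : 0 <= x < 1 / 2 ->
  ex_RInt (fun t => t ^ k * ln_euler_factor m t) 0 x.
Proof.
  move=> Hx; apply: ex_RInt_continuous => t /(Rmin_Rmax_0_le x t ltac:(lra)) Ht.
  by apply: continuous_pow_mul; apply: continuous_ln_euler_factor; lra.
Qed.

Lemma is_derive_pow_mul_ln_euler_factor k m t : 0 <= t < 1 / 2 ->
  is_derive (fun t => t ^ S k * ln_euler_factor m t) t
    (INR (S k) * (t ^ k * ln_euler_factor m t) + 1 * (t ^ S k * d_ln_euler_factor m t)).
Proof.
  move=> Ht; have D := is_derive_mult _ _ _ _ _ (is_derive_pow _ (S k) t _ (is_derive_id t))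
                         (is_derive_ln_euler_factor m t Ht) Rmult_comm.
  set d := (X in is_derive _ _ X) in D.
  suff -> : INR (S k) * (t ^ k * ln_euler_factor m t) + 1 * (t ^ S k * d_ln_euler_factor m t) = d
    by exact: D.
  by rewrite /d /plus /mult /one /=; ring.
Qed.

Lemma logC_term_by_parts k m x : 0 <= x < 1 / 2 ->
  logC_term (S (S k)) x m
  = x ^ S k * ln_euler_factor m x - INR (S k) * RInt (fun t => t ^ k * ln_euler_factor m t) 0 x.
Proof.
  move=> Hx; have Hint t : Rmin 0 x <= t <= Rmax 0 x -> 0 <= t < 1 / 2.
  { by move/(Rmin_Rmax_0_le x t ltac:(lra)); lra. }
  have Hcont t : Rmin 0 x <= t <= Rmax 0 x ->
                 continuous (fun t => t ^ S k * d_ln_euler_factor m t) t.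
  { by move/Hint=> Ht; apply: continuous_pow_mul; apply: continuous_d_ln_euler_factor. }
  have Hterm : RInt (fun t => t ^ S k * d_ln_euler_factor m t) 0 x = logC_term (S (S k)) x m.
  { have := is_RInt_derive (fun x => logC_term (S (S k)) x m) _ 0 x
              (fun t Ht => is_derive_logC_term k m t (Hint t Ht)) Hcont.
    by move/is_RInt_unique=> ->; rewrite /minus /plus /opp /= logC_term_0; ring. }
  have Hcont' t : Rmin 0 x <= t <= Rmax 0 x -> continuous (fun t =>
      INR (S k) * (t ^ k * ln_euler_factor m t) + 1 * (t ^ S k * d_ln_euler_factor m t)) t.
  { move/Hint=> Ht; apply: (continuous_plus (fun t => INR (S k) * (t ^ k * ln_euler_factor m t))).
    - apply: (continuous_scal_r (INR (S k)) (fun t => t ^ k * ln_euler_factor m t)).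
      by apply: continuous_pow_mul; apply: continuous_ln_euler_factor.
    - apply: (continuous_scal_r 1 (fun t => t ^ S k * d_ln_euler_factor m t)).
      by apply: continuous_pow_mul; apply: continuous_d_ln_euler_factor. }
  have Hparts := is_RInt_derive (fun t => t ^ S k * ln_euler_factor m t) _ 0 x
    (fun t Ht => is_derive_pow_mul_ln_euler_factor k m t (Hint t Ht)) Hcont'.
  move/is_RInt_unique: Hparts; rewrite RInt_lincomb; last by apply: ex_RInt_continuous.
  2: exact: ex_RInt_pow_mul_ln_euler_factor.
  by rewrite Hterm /minus /plus /opp /= !Rmult_0_l; lra.
Qed.

Lemma ex_RInt_pow_mul_ln_cos k x : 0 <= x < 1 / 2 ->
  ex_RInt (fun t => t ^ k * ln (cos (PI * t))) 0 x.
Proof.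
  move=> Hx; apply: ex_RInt_continuous => t /(Rmin_Rmax_0_le x t ltac:(lra)) Ht.
  have Hc := cos_PI_pos t ltac:(lra).
  by apply: ex_derive_continuous; auto_derive; lra.
Qed.

Lemma is_RInt_pow_mul_sum k N x : 0 <= x < 1 / 2 ->
  is_RInt (fun t => t ^ k * sum_f_R0 (fun m => ln_euler_factor m t) N) 0 x
    (sum_f_R0 (fun m => RInt (fun t => t ^ k * ln_euler_factor m t) 0 x) N).
Proof.
  move=> Hx; elim: N => [|N IH]; first by apply: RInt_correct; apply: ex_RInt_pow_mul_ln_euler_factor.
  have := is_RInt_plus _ _ _ _ _ _ IH
            (RInt_correct _ _ _ (ex_RInt_pow_mul_ln_euler_factor k (S N) x Hx)).
  by apply: is_RInt_ext => t _; rewrite /plus /=; ring.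
Qed.

Lemma pow_mul_ln_wallis_ratio k N t : 0 <= t < 1 / 2 ->
  t ^ k * ln (wallis_ratio N t)
  = t ^ k * ln (cos (PI * t)) - t ^ k * sum_f_R0 (fun m => ln_euler_factor m t) N.
Proof. by move=> Ht; rewrite (ln_cos_partial_product N t Ht); ring. Qed.

Lemma RInt_pow_mul_ln_wallis_ratio k N x : 0 <= x < 1 / 2 ->
  is_RInt (fun t => t ^ k * ln (wallis_ratio N t)) 0 x
    (RInt (fun t => t ^ k * ln (cos (PI * t))) 0 x
     - sum_f_R0 (fun m => RInt (fun t => t ^ k * ln_euler_factor m t) 0 x) N).
Proof.
  move=> Hx; apply: (is_RInt_ext (fun t => t ^ k * ln (cos (PI * t))
                       - t ^ k * sum_f_R0 (fun m => ln_euler_factor m t) N)).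
  - move=> t; rewrite Rmin_left ?Rmax_right; try lra.
    by move=> Ht; rewrite pow_mul_ln_wallis_ratio //; lra.
  - apply: (is_RInt_minus (fun t => t ^ k * ln (cos (PI * t)))); last exact: is_RInt_pow_mul_sum.
    by apply: RInt_correct; apply: ex_RInt_pow_mul_ln_cos.
Qed.

Definition logC_remainder k N x :=
  x ^ S k * ln (wallis_ratio N x) - INR (S k) * RInt (fun t => t ^ k * ln (wallis_ratio N t)) 0 x.

Lemma sum_logC_term k N x : 0 <= x < 1 / 2 ->
  sum_f_R0 (logC_term (S (S k)) x) N
  = x ^ S k * ln (cos (PI * x)) - INR (S k) * RInt (fun t => t ^ k * ln (cos (PI * t))) 0 x
    - logC_remainder k N x.
Proof.
  move=> Hx; have Hsum : sum_f_R0 (logC_term (S (S k)) x) N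
    = x ^ S k * sum_f_R0 (fun m => ln_euler_factor m x) N
      - INR (S k) * sum_f_R0 (fun m => RInt (fun t => t ^ k * ln_euler_factor m t) 0 x) N.
  { rewrite (sum_eq _ _ _ (fun m _ => logC_term_by_parts k m x Hx)).
    elim: N => [|N IH]; first by rewrite /=; ring.
    by rewrite !tech5 IH; ring. }
  rewrite Hsum /logC_remainder (is_RInt_unique _ _ _ _ (RInt_pow_mul_ln_wallis_ratio k N x Hx))
    (ln_cos_partial_product N x Hx); ring.
Qed.

Lemma pow_unit_interval t n : 0 <= t <= 1 -> 0 <= t ^ n <= 1.
Proof. by move=> Ht; split; [apply: pow_le | rewrite -(pow1 n); apply: pow_incr]; lra. Qed.

Lemma logC_remainder_bound k N x : 0 <= x < 1 / 2 ->
  Rabs (logC_remainder k N x) <= (INR k + 2) * (2 / (INR N + 1)).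
Proof.
  move=> Hx; have HN := pos_INR N; have Hk := pos_INR k.
  set eps := 2 / (INR N + 1).
  have Hint : Rabs (RInt (fun t => t ^ k * ln (wallis_ratio N t)) 0 x) <= (x - 0) * eps.
  { apply: abs_RInt_le_const; first lra.
    - by eexists; apply: RInt_pow_mul_ln_wallis_ratio.
    - move=> t Ht; have [H0 H1] := pow_unit_interval t k ltac:(lra).
      have Hb := ln_wallis_ratio_bound N t ltac:(lra).
      rewrite Rabs_mult Rabs_pos_eq // -[eps]Rmult_1_l.
      by apply: Rmult_le_compat => //; apply: Rabs_pos. }
  have [H0 H1] := pow_unit_interval x (S k) ltac:(lra).
  have Hln := ln_wallis_ratio_bound N x ltac:(lra); rewrite -/eps in Hln.
  rewrite /logC_remainder S_INR; apply: (Rle_trans _ _ _ (Rabs_triang _ _)).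
  rewrite Rabs_Ropp (Rabs_mult (x ^ S k)) (Rabs_mult (INR k + 1)).
  rewrite (Rabs_pos_eq (x ^ S k)) // (Rabs_pos_eq (INR k + 1)); last lra.
  have Ha : x ^ S k * Rabs (ln (wallis_ratio N x)) <= eps.
  { apply: (Rle_trans _ (1 * eps)); last lra.
    by apply: Rmult_le_compat => //; apply: Rabs_pos. }
  have Hb : (INR k + 1) * Rabs (RInt (fun t => t ^ k * ln (wallis_ratio N t)) 0 x)
            <= (INR k + 1) * eps.
  { apply: Rmult_le_compat_l; first lra.
    apply: (Rle_trans _ _ _ Hint).
    have : 0 <= eps by apply: Rdiv_le_0_compat; lra.
    nra. }
  lra.
Qed.

Lemma is_lim_seq_div_succ C : is_lim_seq (fun n => C / (INR n + 1)) 0.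
Proof.
  have Hinf : is_lim_seq (fun n => INR (S n)) p_infty.
  { by have := is_lim_seq_INR; move/is_lim_seq_incr_1. }
  have H := is_lim_seq_scal_l _ C _ (is_lim_seq_inv _ _ Hinf ltac:(discriminate)).
  rewrite (_ : Rbar_mult C (Rbar_inv p_infty) = 0) in H; last by rewrite /= Rmult_0_r.
  by apply: (is_lim_seq_ext _ _ _ _ H) => n; rewrite S_INR.
Qed.

Lemma logC_eq_integral k x : 0 <= x < 1 / 2 ->
  logC (S (S k)) x
  = x ^ S k * ln (cos (PI * x)) - INR (S k) * RInt (fun t => t ^ k * ln (cos (PI * t))) 0 x.
Proof.
  move=> Hx; set L := _ - _; apply: is_series_unique.
  have Hrem : is_lim_seq (fun N => logC_remainder k N x) 0.
  { apply: (is_lim_seq_le_le (fun N => - ((INR k + 2) * 2 / (INR N + 1))) _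
                             (fun N => (INR k + 2) * 2 / (INR N + 1))).
    - move=> N; have := logC_remainder_bound k N x Hx; move/Rabs_le_between.
      by rewrite /Rdiv Rmult_assoc.
    - by have := is_lim_seq_div_succ ((INR k + 2) * 2); move/is_lim_seq_opp; rewrite /= Ropp_0.
    - exact: is_lim_seq_div_succ. }
  have := is_lim_seq_minus _ _ L 0 L (is_lim_seq_const L) Hrem.
  rewrite /is_Rbar_minus /is_Rbar_plus /= Ropp_0 Rplus_0_r => /(_ eq_refl) Hpart.
  apply: (filterlim_ext (fun N => L - logC_remainder k N x)) => [N|//].
  by rewrite sum_n_Reals sum_logC_term.
Qed.

Lemma RInt_pow_mul_ln_cos_half k :
  RInt (fun t => t ^ k * ln (cos (t / 2))) 0 (PI / 2)
  = (2 * PI) ^ S k * RInt (fun t => t ^ k * ln (cos (PI * t))) 0 (1 / 4).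
Proof.
  have Hpi := PI_RGT_0.
  have Hex : ex_RInt (fun t => t ^ k * ln (cos (t / 2))) 0 (PI / 2).
  { apply: ex_RInt_continuous => t /(Rmin_Rmax_0_le (PI / 2) t ltac:(lra)) Ht.
    have Hc : 0 < cos (t / 2) by apply: cos_gt_0; lra.
    by apply: ex_derive_continuous; auto_derive; lra. }
  have := RInt_comp_lin (fun t => t ^ k * ln (cos (t / 2))) (2 * PI) 0 0 (1 / 4).
  have -> : 2 * PI * 0 + 0 = 0 by ring.
  have -> : 2 * PI * (1 / 4) + 0 = PI / 2 by field.
  move=> /(_ Hex) <-.
  have := RInt_scal (fun t => t ^ k * ln (cos (PI * t))) 0 (1 / 4) ((2 * PI) ^ S k).
  move=> /(_ (ex_RInt_pow_mul_ln_cos k (1 / 4) ltac:(lra))); rewrite /scal /= /mult /= => <-.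
  apply: RInt_ext => t _.
  rewrite (_ : 2 * PI * t + 0 = 2 * PI * t); last ring.
  rewrite (_ : 2 * PI * t / 2 = PI * t); last field.
  by rewrite Rpow_mult_distr; apply: Rminus_diag_uniq; ring.
Qed.

Lemma ln_cos_PI4 : ln (cos (PI / 4)) = - (ln 2 / 2).
Proof.
  have Hs : 0 < sqrt 2 by apply: sqrt_lt_R0; lra.
  rewrite cos_PI4 /Rdiv Rmult_1_l ln_Rinv //.
  have Hln : ln 2 = ln (sqrt 2) + ln (sqrt 2) by rewrite -ln_mult ?sqrt_sqrt; lra.
  lra.
Qed.

Theorem corollary2p2 (r : nat) (hr : (2 <= r)%nat) :
  RInt (fun t => t ^ (r - 2) * ln (cos (t / 2))) 0 (PI / 2)
  = - (PI ^ (r - 1) / INR (r - 1))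
    * (/ 2 ^ r * ln 2 + 2 ^ (r - 1) * logC r (1 / 4)).
Proof.
  have [k ->] : exists k, r = S (S k) by exists (r - 2)%nat; lia.
  rewrite (_ : (S (S k) - 2 = k)%nat); last lia.
  rewrite (_ : (S (S k) - 1 = S k)%nat); last lia.
  rewrite RInt_pow_mul_ln_cos_half logC_eq_integral; last lra.
  rewrite (_ : PI * (1 / 4) = PI / 4); last field.
  rewrite ln_cos_PI4.
  have Hquarter : (1 / 4) ^ S k = / (2 ^ S k * 2 ^ S k).
  { by rewrite -Rpow_mult_distr -pow_inv; f_equal; field. }
  rewrite Hquarter Rpow_mult_distr (_ : 2 ^ S (S k) = 2 * 2 ^ S k) //.
  have HK : INR (S k) <> 0 by apply: not_0_INR.
  have H2 : 0 < 2 ^ S k by apply: pow_lt; lra.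
  move: HK H2; generalize (2 ^ S k) (PI ^ S k) (INR (S k)) => a p K HK Ha.
  apply: Rminus_diag_uniq; field; lra.
Qed.
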